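(* For every VASS MDP $\mathcal{A}$ there exist MD strategies $\pi_1,\dots,\pi_k\in\Sigma_{\mathrm{MD}}$, states $p_1,\dots,p_k\in Q$, and a function $\mathit{Decomp}_{\mathcal{A}}$ such that for every finite path $\alpha$ (of positive length): (1) $\mathit{Decomp}_{\mathcal{A}}(\alpha)$ is an MD-decomposition of $\alpha$ under $\pi_1,\dots,\pi_k$ and $p_1,\dots,p_k$; (2) $\mathit{Decomp}_{\mathcal{A}}(\alpha)=\mathit{Decomp}_{\mathcal{A}}(\alpha_{..\mathit{len}(\alpha)-1})\circ\gamma^1\circ\cdots\circ\gamma^k$ where exactly one of $\gamma^1,\dots,\gamma^k$ has positive length (its index $i$ is called the mode of $\alpha$); (3) if the last state of $\alpha_{..\mathit{len}(\alpha)-1}$ is probabilistic, then the mode of $\alpha$ does not depend on the last transition of $\alpha$ (i.e., all one-transition extensions of $\alpha_{..\mathit{len}(\alpha)-1}$ have the same mode).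
   Context: A $d$-dimensional VASS MDP is a tuple $\mathcal{A}=(Q,(Q_n,Q_p),T,P)$: $Q$ finite nonempty set of states partitioned into nondeterministic states $Q_n$ and probabilistic states $Q_p$; $T\subseteq Q\times\mathbb{Z}^d\times Q$ a finite set of transitions such that every $p\in Q$ has a nonempty set $\mathit{Out}(p)$ of outgoing transitions $(p,\mathbf{u},q)$; $P$ assigns to each $t\in\mathit{Out}(p)$ with $p\in Q_p$ a positive rational probability, summing to $1$ over $\mathit{Out}(p)$. A finite path of length $m$ is $p_0,\mathbf{v}_1,p_1,\dots,\mathbf{v}_m,p_m$ with $(p_i,\mathbf{v}_{i+1},p_{i+1})\in T$; a path of length $0$ is a single state. $\mathit{len}(\alpha)$ is the length, and $\alpha_{..i}=p_0,\mathbf{v}_1,\dots,p_i$ is the prefix of length $i$. For paths $\alpha$ ending in state $q_0$ and $\beta=q_0,\mathbf{u}_1,q_1,\dots,q_\ell$, the concatenation is $\alpha\circ\beta=p_0,\mathbf{v}_1,\dots,p_m,\mathbf{u}_1,q_1,\dots,q_\ell$ (with $p_m=q_0$). An MD strategy $\sigma$ assigns to each $p\in Q_n$ a single transition $\sigma(p)\in\mathit{Out}(p)$; $\Sigma_{\mathrm{MD}}$ is the set of MD strategies. A path $\alpha=p_0,\mathbf{v}_1,\dots,p_m$ is compatible with MD strategy $\sigma$ if $\sigma(p_i)=(p_i,\mathbf{v}_{i+1},p_{i+1})$ for every $i<m$ with $p_i\in Q_n$. Given $\pi_1,\dots,\pi_k\in\Sigma_{\mathrm{MD}}$ and $p_1,\dots,p_k\in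 Q$ (not necessarily distinct), an MD-decomposition of a path $\alpha$ under them is a decomposition $\alpha=\gamma_1^1\circ\cdots\circ\gamma_1^k\circ\gamma_2^1\circ\cdots\circ\gamma_2^k\circ\cdots\circ\gamma_\ell^1\circ\cdots\circ\gamma_\ell^k$ into finitely many paths (possibly of length zero) such that for all $i<\ell$ and $j\le k$ the last state of $\gamma_i^j$ equals the first state of $\gamma_{i+1}^j$, and for every $j\le k$, $\gamma_1^j\circ\cdots\circ\gamma_\ell^j$ is a path starting in $p_j$ and compatible with $\pi_j$.
   Formalization: In the equation $\alpha=\gamma_1^1\circ\cdots\circ\gamma_\ell^k$ of an MD-decomposition, length-zero pieces are neutral, so each positive-length piece need only start at the last state of the preceding positive-length piece (or at the first state of α). The statement above fails without it. *)

From HB Require Import structures.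
From mathcomp Require Import all_boot all_order all_algebra.
Set Implicit Arguments. Unset Strict Implicit. Unset Printing Implicit Defensive.
Import Order.TTheory GRing.Theory Num.Theory.

Notation vec d := ('rV[int]_d).

(* A d-dimensional VASS MDP.  [isprob p] means p is probabilistic (p \in Q_p);
   otherwise p is nondeterministic (p \in Q_n). *)
Record VASS_MDP (d : nat) := VassMdp {
  st : finType;
  st_nonempty : 0 < #|st|;
  isprob : pred st;
  trans : seq (st * vec d * st);
  trans_uniq : uniq trans;
  out_nonempty : forall p : st, [seq t <- trans | t.1.1 == p] != [::];
  prob : st * vec d * st -> rat;
  prob_pos : forall (p : st) t, isprob p -> t \in [seq t <- trans | t.1.1 == p] ->
                (0 < prob t)%R;
  prob_sum : forall p : st, isprob p ->
                (\sum_(t <- [seq t <- trans | t.1.1 == p]) prob t = 1)%R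
}.

Section Paths.
Variables (d : nat) (A : VASS_MDP d).
Local Notation Q := (st A).

Definition Out (p : Q) := [seq t <- trans A | t.1.1 == p].

(* A (candidate) finite path: initial state followed by a sequence of steps
   (v_{i+1}, p_{i+1}). *)
Record vpath := VPath { pstart : Q; psteps : seq (vec d * Q) }.

Fixpoint valid_from (p : Q) (s : seq (vec d * Q)) : bool :=
  match s with
  | [::] => true
  | (v, q) :: s' => ((p, v, q) \in trans A) && valid_from q s'
  end.

Definition is_path (a : vpath) : bool := valid_from (pstart a) (psteps a).

Definition len (a : vpath) : nat := size (psteps a).

Definition plast (a : vpath) : Q := last (pstart a) (map snd (psteps a)).

Definition pprefix (a : vpath) (i : nat) : vpath := VPath (pstart a) (take i (psteps a)).

(* MD strategy: a choice of outgoing transition for every nondeterministic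
   state (the value on probabilistic states is irrelevant). *)
Definition strategy := Q -> vec d * Q.
Definition is_MD (sigma : strategy) : Prop :=
  forall p : Q, ~~ isprob p -> (p, (sigma p).1, (sigma p).2) \in trans A.

Fixpoint compat_from (sigma : strategy) (p : Q) (s : seq (vec d * Q)) : bool :=
  match s with
  | [::] => true
  | (v, q) :: s' => (isprob p || (sigma p == (v, q))) && compat_from sigma q s'
  end.

Definition compatible (sigma : strategy) (a : vpath) : bool :=
  compat_from sigma (pstart a) (psteps a).

(* alpha = g_1 o g_2 o ... o g_n, where length-zero paths act as neutral
   elements of concatenation. *)
Fixpoint chain_ok (cur : Q) (gs : seq vpath) : bool :=
  match gs with
  | [::] => true
  | g :: gs' => if psteps g is [::] then chain_ok cur gs'
                else (pstart g == cur) && chain_ok (plast g) gs'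
  end.

Definition is_concat (gs : seq vpath) (a : vpath) : Prop :=
  chain_ok (pstart a) gs /\ psteps a = flatten (map psteps gs).

(* A decomposition is a sequence of rounds; round i is the k-tuple
   (gamma_i^1, ..., gamma_i^k). *)
Definition decomp (k : nat) := seq ('I_k -> vpath).

Definition flat_decomp k (D : decomp k) : seq vpath :=
  flatten [seq [seq r j | j <- enum 'I_k] | r <- D].

Definition is_MD_decomposition k (pis : 'I_k -> strategy) (ps : 'I_k -> Q)
    (D : decomp k) (a : vpath) : Prop :=
  [/\ 0 < size D,
      forall (i : nat) (j : 'I_k), i < size D -> forall r0, is_path (nth r0 D i j),
      is_concat (flat_decomp D) a,
      forall (i : nat) (j : 'I_k), i.+1 < size D ->
         forall r0, plast (nth r0 D i j) = pstart (nth r0 D i.+1 j) &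
      forall (j : 'I_k),
        (forall r0, pstart (head r0 D j) = ps j) /\
        let cj := VPath (ps j) (flatten [seq psteps (r j) | r <- D]) in
        is_path cj /\ compatible (pis j) cj].

End Paths.

From mathcomp Require Import all_boot all_order all_algebra.
From Stdlib Require Import FunctionalExtensionality.
Set Implicit Arguments. Unset Strict Implicit. Unset Printing Implicit Defensive.

(* A path alpha with transitions t_0 ... t_(n-1) is cut into one-transition
   rounds: round i gives t_i to a single mode (the mode of the prefix ending
   with t_i) and an empty path to every other mode.  The difficulty is to
   choose modes online so that, for each mode, the transitions it receives
   form one path compatible with a fixed MD strategy.
   Modes are "refined types".  Enumerate the nondeterministic states
   r_1, ..., r_m.  The type of index i is built by induction on this list:
   its r-component is the transition most recently taken from r among the
   earlier indices having the same refined type for the remaining states.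
   The key combinatorial fact (rtype_chain) is that two consecutive indices
   of equal type are linked: the first ends where the second starts.  The
   mode of i is the type of i together with the state where that type first
   occurs; reading the type as a strategy gives an MD strategy that agrees
   with every transition of the mode (rtype_label). *)

Section RefinedTypes.
Variables (T Q : eqType) (src tgt : T -> Q) (t0 : T) (dflt : Q -> T).

Fixpoint last_choice (ts : seq T) (r : Q) (f : nat -> seq T) (v : seq T)
    (j : nat) : T :=
  if (f j == v) && (src (nth t0 ts j) == r) then nth t0 ts j
  else if j is j'.+1 then last_choice ts r f v j' else dflt r.

Fixpoint rtype (ts : seq T) (rs : seq Q) (i : nat) : seq T :=
  if rs is r :: rs' then
    last_choice ts r (rtype ts rs') (rtype ts rs' i) i :: rtype ts rs' i
  else [::].

Definition chained (ts : seq T) : Prop :=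
  forall i, i.+1 < size ts -> tgt (nth t0 ts i) = src (nth t0 ts i.+1).

Lemma last_choice_stable ts r f v j y :
  j <= y ->
  (forall x, j < x <= y -> ~~ ((f x == v) && (src (nth t0 ts x) == r))) ->
  last_choice ts r f v y = last_choice ts r f v j.
Proof.
elim: y => [|y IH]; first by rewrite leqn0 => /eqP ->.
rewrite leq_eqVlt => /orP[/eqP -> //|jy] skip.
rewrite /= (negbTE (skip y.+1 _)) ?jy ?leqnn //.
by apply: IH => // x /andP[jx xy]; apply: skip; rewrite jx leqW.
Qed.

Lemma last_choice_other ts r f v j : src (nth t0 ts j) != r ->
  last_choice ts r f v j = if j is j'.+1 then last_choice ts r f v j' else dflt r.
Proof. by case: j => [|j] /= /negbTE ->; rewrite andbF. Qed.

Lemma last_choice_prefix ts ts' r f f' v j :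
  (forall x, x <= j -> nth t0 ts x = nth t0 ts' x /\ f x = f' x) ->
  last_choice ts r f v j = last_choice ts' r f' v j.
Proof.
elim: j => [|j IH] same /=; first by have [-> ->] := same 0 (leqnn 0).
have [-> ->] := same j.+1 (leqnn _).
by rewrite IH // => x xj; apply: same; rewrite leqW.
Qed.

(* Induction step of [rtype_chain]: if the refined types of i and i' agree
   and no index in between has the same last choice, then the first index
   j1 in between with the same tail type, and i' itself, both leave r. *)
Lemma last_choice_return ts r (P : nat -> seq T) v i j1 i' :
  i < j1 < i' -> P j1 = v -> P i' = v ->
  (forall x, i < x < j1 -> P x != v) ->
  (forall x, i < x < i' -> P x = v ->
     last_choice ts r P v x != last_choice ts r P v i) ->
  last_choice ts r P v i' = last_choice ts r P v i ->
  src (nth t0 ts j1) = r /\ src (nth t0 ts i') = r.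
Proof.
set lab := last_choice ts r P v.
move=> /andP[ij1 j1i'] Pj1 Pi' before_j1 differ same.
have j1_r : src (nth t0 ts j1) = r.
  apply/eqP; apply: contraTT (differ j1 _ Pj1) => [not_r|]; last by rewrite ij1.
  rewrite negbK /lab (last_choice_stable (ltnW ij1)) // => x /andP[ix].
  rewrite leq_eqVlt => /orP[/eqP -> | xj1]; first by rewrite (negbTE not_r) andbF.
  by rewrite (negbTE (before_j1 x _)) ?ix.
split=> //; apply/eqP/negPn/negP => not_r.
have avoid m : j1 + m < i' -> lab (j1 + m) != lab i.
  elim: m => [|m IHm] lt_i'; first by rewrite addn0 differ ?ij1 ?j1i'.
  have [Pm|Pm] := eqVneq (P (j1 + m.+1)) v.
    by apply: differ Pm; rewrite lt_i' andbT ltn_addr.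
  rewrite /lab (@last_choice_stable _ _ _ _ (j1 + m)) ?addnS ?leqnn //.
    by apply: IHm; rewrite ltnW // -addnS.
  move=> x /andP[lt le]; have -> : x = (j1 + m).+1 by apply/eqP; rewrite eqn_leq le.
  by rewrite -addnS (negbTE Pm).
have i'_pos : 0 < i' by apply: leq_ltn_trans j1i'.
have step : lab i' = lab i'.-1.
  by rewrite /lab [LHS]last_choice_other //; case: (i') i'_pos.
have j1_le : j1 <= i'.-1 by rewrite -ltnS prednK.
have := avoid (i'.-1 - j1); rewrite subnKC // ltn_predL i'_pos -step same.
by rewrite eqxx => /(_ isT).
Qed.

Lemma size_rtype ts rs i : size (rtype ts rs i) = size rs.
Proof. by elim: rs => //= r rs ->. Qed.

Lemma rtype_chain ts rs : chained ts ->
  forall i i', i < i' < size ts -> rtype ts rs i = rtype ts rs i' ->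
  (forall j, i < j < i' -> rtype ts rs j != rtype ts rs i) ->
  tgt (nth t0 ts i) = src (nth t0 ts i').
Proof.
move=> chain; elim: rs => [|r rs IH] i i' /andP[ii' i'_size].
  move=> _ between; have [i'_eq|lt] := eqVneq i' i.+1.
    by rewrite i'_eq chain // -i'_eq.
  by have := between i.+1; rewrite ltnSn ltn_neqAle eq_sym lt ii' => /(_ isT).
set P := rtype ts rs; set v := P i.
move=> /= [lab_eq Pi'] between; have {}Pi' : P i' = v by [].
move: lab_eq; rewrite -/P -/v Pi' => /esym lab_eq.
have differ x : i < x < i' -> P x = v ->
    last_choice ts r P v x != last_choice ts r P v i.
  by move=> ix Px; have := between x ix; rewrite /= -/P Px; apply: contra => /eqP ->.
have [returns|no_return] := boolP [exists x : 'I_i', (i < x) && (P x == v)].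
  have exP : exists x, (i < x < i') && (P x == v).
    by have /existsP[x /andP[ix Px]] := returns; exists x; rewrite ix ltn_ord.
  have [j1 /andP[/andP[ij1 j1i'] /eqP Pj1] first] := ex_minnP exP.
  have before x : i < x < j1 -> P x != v.
    move=> /andP[ix xj1]; apply: contraTN (xj1) => /eqP Px.
    by rewrite -leqNgt first // ix (ltn_trans xj1 j1i') Px eqxx.
  have [j1_r i'_r] := last_choice_return (P := P) (ts := ts) (r := r)
    (introT andP (conj ij1 j1i')) Pj1 Pi' before differ lab_eq.
  by rewrite (IH i j1) ?j1_r ?i'_r ?ij1 ?(ltn_trans j1i' i'_size) ?Pj1.
apply: IH; rewrite ?ii' ?Pi' // => j /andP[ij ji']; apply: contraNN no_return.
by move=> Pj; apply/existsP; exists (Ordinal ji'); rewrite /= ij.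
Qed.

Lemma rtype_label ts rs i p : p \in rs -> src (nth t0 ts i) = p ->
  nth t0 (rtype ts rs i) (index p rs) = nth t0 ts i.
Proof.
elim: rs => //= r rs IH; rewrite inE => p_in src_i.
have [r_p|r_p] := eqVneq r p.
  by rewrite -r_p in src_i; case: (i) src_i => [|n] /= ->; rewrite !eqxx.
by rewrite /= IH //; move: p_in; rewrite eq_sym (negbTE r_p).
Qed.

Lemma rtype_mem ts rs i (S : pred T) :
  (forall x, nth t0 ts x \in S) -> (forall r, dflt r \in S) ->
  all (mem S) (rtype ts rs i).
Proof.
move=> ts_S dflt_S; elim: rs => //= r rs ->; rewrite andbT.
by move: (rtype ts rs i) => v; elim: i => [|j IH] /=; case: ifP.
Qed.

Lemma rtype_prefix ts ts' rs i :
  (forall j, j <= i -> nth t0 ts j = nth t0 ts' j) ->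
  rtype ts rs i = rtype ts' rs i.
Proof.
elim: rs i => //= r rs IH i same.
have P_same j : j <= i -> rtype ts rs j = rtype ts' rs j.
  by move=> ji; apply: IH => x xj; apply: same; apply: leq_trans xj ji.
rewrite (P_same i) //; congr (_ :: _); apply: last_choice_prefix => x xi.
by rewrite same ?P_same.
Qed.

Lemma rtype_unlabelled ts ts' rs i :
  (forall j, j < i -> nth t0 ts j = nth t0 ts' j) ->
  src (nth t0 ts i) = src (nth t0 ts' i) -> src (nth t0 ts i) \notin rs ->
  rtype ts rs i = rtype ts' rs i.
Proof.
move=> same src_i; elim: rs => //= r rs IH; rewrite inE negb_or => /andP[r_i rs_i].
rewrite (IH rs_i); congr (_ :: _).
rewrite !last_choice_other -?src_i //; case: i same {src_i r_i rs_i IH} => // n same.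
apply: last_choice_prefix => x xn; split; first exact: same.
by apply: rtype_prefix => j jx; apply: same; rewrite ltnS (leq_trans jx).
Qed.
End RefinedTypes.

Lemma flatten_single (I : eqType) (U : Type) (l : seq I) (c : I) (f : I -> seq U) :
  uniq l -> c \in l -> (forall j, j != c -> f j = [::]) -> flatten (map f l) = f c.
Proof.
move=> l_uniq c_in empty; elim: l l_uniq c_in => //= j l IH /andP[j_l l_uniq].
rewrite inE; have [j_c _|j_c] := eqVneq j c; last by rewrite empty //= => /IH ->.
subst c.
suff -> : flatten (map f l) = [::] by rewrite cats0.
elim: l j_l {IH l_uniq} => //= x l IHl; rewrite inE negb_or => /andP[j_x j_l].
by rewrite IHl // cats0 empty // eq_sym.
Qed.

Section VassModes.
Variables (d : nat) (A : VASS_MDP d).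
Local Notation Q := (st A).
Local Notation transition := (Q * vec d * Q)%type.

Definition tsrc (t : transition) : Q := t.1.1.
Definition ttgt (t : transition) : Q := t.2.
Definition tstep (t : transition) : vec d * Q := (t.1.2, t.2).

Fixpoint transitions (p : Q) (s : seq (vec d * Q)) : seq transition :=
  match s with
  | [::] => [::]
  | (v, q) :: s' => (p, v, q) :: transitions q s'
  end.

Definition path_trans (a : vpath A) : seq transition :=
  transitions (pstart a) (psteps a).

Lemma size_transitions p s : size (transitions p s) = size s.
Proof. by elim: s p => [|[v q] s IH] p //=; rewrite IH. Qed.

Lemma transitions_chained t0 p s : chained tsrc ttgt t0 (transitions p s).
Proof.
elim: s p => [|[v q] s IH] p [|i] //=; last by rewrite ltnS; apply: IH.
by case: s {IH} => [|[]].
Qed.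

Lemma valid_transitions p s : valid_from p s = all (mem (trans A)) (transitions p s).
Proof. by elim: s p => [|[v q] s IH] p //=; rewrite IH. Qed.

Lemma tstep_transitions p s : map tstep (transitions p s) = s.
Proof. by elim: s p => [|[v q] s IH] p //=; rewrite IH. Qed.

Lemma take_transitions p s n : transitions p (take n s) = take n (transitions p s).
Proof. by elim: s p n => [|[v q] s IH] p [|n] //=; rewrite IH. Qed.

Lemma tsrc_transitions t0 p s i : i < size s ->
  tsrc (nth t0 (transitions p s) i) = last p (map snd (take i s)).
Proof. by elim: s p i => [|[v q] s IH] p [|i] //=; rewrite ltnS; apply: IH. Qed.

Lemma valid_cat (p : Q) (s1 s2 : seq (vec d * Q)) :
  valid_from p (s1 ++ s2) = valid_from p s1 && valid_from (last p (map snd s1)) s2.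
Proof. by elim: s1 p => [|[v q] s IH] p //=; rewrite IH andbA. Qed.

Lemma compat_cat (sigma : strategy A) (p : Q) (s1 s2 : seq (vec d * Q)) :
  compat_from sigma p (s1 ++ s2) =
  compat_from sigma p s1 && compat_from sigma (last p (map snd s1)) s2.
Proof. by elim: s1 p => [|[v q] s IH] p //=; rewrite IH andbA. Qed.

Lemma chain_ok_empty (cur : Q) (l rest : seq (vpath A)) :
  all (fun g => nilp (psteps g)) l -> chain_ok cur (l ++ rest) = chain_ok cur rest.
Proof. by elim: l => //= g l IH /andP[g_nil /IH ->]; case: (psteps g) g_nil. Qed.

Lemma chain_ok_single (I : eqType) (l : seq I) (c : I) (f : I -> vpath A)
    (rest : seq (vpath A)) (cur : Q) :
  uniq l -> c \in l -> (forall j, j != c -> psteps (f j) = [::]) ->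
  psteps (f c) != [::] ->
  chain_ok cur (map f l ++ rest) = (pstart (f c) == cur) && chain_ok (plast (f c)) rest.
Proof.
move=> l_uniq c_in empty fc; elim: l l_uniq c_in cur => //= j l IH /andP[j_l l_uniq].
rewrite inE => c_in cur; have [j_c|j_c] := eqVneq j c; last first.
  by rewrite empty //; apply: IH => //; move: c_in; rewrite eq_sym (negbTE j_c).
subst c; case: (psteps (f j)) fc => [//|x s] _ /=.
rewrite chain_ok_empty // all_map; apply/allP => y y_l /=.
by rewrite /nilp empty //; apply: contraNneq j_l => <-.
Qed.

Definition nondet : seq Q := [seq p <- enum Q | ~~ isprob p].

Lemma mem_nondet p : (p \in nondet) = ~~ isprob p.
Proof. by rewrite mem_filter mem_enum andbT. Qed.

(* A refined type is encoded by the positions of its transitions in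
   [trans A]; a mode is a code together with a start state, so that modes
   form a finite type. *)
Definition type_code : finType :=
  {ffun 'I_(size nondet).+1 -> 'I_(size (trans A)).+1}.

Definition mode_key : finType := (type_code * Q)%type.

Variable t0 : transition.
Hypothesis t0_trans : t0 \in trans A.

Definition default_out (p : Q) : transition := head t0 (Out p).

Lemma default_out_spec p : default_out p \in trans A /\ tsrc (default_out p) = p.
Proof.
have : default_out p \in Out p.
  have := out_nonempty p; rewrite -/(Out p) /default_out.
  by case: (Out p) => // t s _; rewrite mem_head.
by rewrite mem_filter => /andP[/eqP].
Qed.

Lemma nth_trans ts x : all (mem (trans A)) ts -> nth t0 ts x \in trans A.
Proof.
move=> /allP ts_trans; case: (ltnP x (size ts)) => x_lt; last by rewrite nth_default.
by apply: ts_trans; rewrite mem_nth.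
Qed.

Definition step_type (ts : seq transition) (i : nat) : seq transition :=
  rtype tsrc t0 default_out ts nondet i.

Lemma step_type_trans ts i :
  all (mem (trans A)) ts -> all (mem (trans A)) (step_type ts i).
Proof.
move=> ts_trans; apply: rtype_mem => [x|r]; first exact: nth_trans.
by case: (default_out_spec r).
Qed.

Definition encode (v : seq transition) : type_code :=
  [ffun x : 'I_(size nondet).+1 => inord (index (nth t0 v x) (trans A))].

Lemma encode_inj v w : size v = size nondet -> size w = size nondet ->
  all (mem (trans A)) v -> all (mem (trans A)) w -> encode v = encode w -> v = w.
Proof.
move=> v_size w_size /allP v_trans /allP w_trans same.
apply: (@eq_from_nth _ t0); first by rewrite v_size w_size.
move=> x; rewrite v_size => x_lt.
have := congr1 (fun c : type_code => (c (inord x) : nat)) same.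
rewrite !ffunE !inordK ?ltnS ?index_size ?(ltnW x_lt) // => idx.
rewrite -[nth t0 v x](nth_index t0 (v_trans _ (mem_nth t0 _))) ?v_size //.
by rewrite idx nth_index //; apply: w_trans; rewrite mem_nth // w_size.
Qed.

Definition decode (c : type_code) : strategy A := fun p =>
  let t := nth t0 (trans A) (c (inord (index p nondet))) in
  if tsrc t == p then tstep t else tstep (default_out p).

Lemma decode_MD c : is_MD (decode c).
Proof.
move=> p _; rewrite /decode; set t := nth t0 _ _.
have t_trans : t \in trans A by apply: nth_trans; apply/allP.
case: ifP => [/eqP <-|_]; first by case: t t_trans => [[]].
by case: (default_out_spec p); case: (default_out p) => [[q v] q'] /= ? <-.
Qed.

Definition first_occurrence (ts : seq transition) (i : nat) : nat :=
  find (fun j => step_type ts j == step_type ts i) (iota 0 i.+1).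
Definition class_start (ts : seq transition) (i : nat) : Q :=
  tsrc (nth t0 ts (first_occurrence ts i)).

Definition mode (ts : seq transition) (i : nat) : 'I_#|mode_key| :=
  enum_rank (encode (step_type ts i), class_start ts i).
Definition mode_strategy (c : 'I_#|mode_key|) : strategy A := decode (enum_val c).1.
Definition mode_start (c : 'I_#|mode_key|) : Q := (enum_val c).2.

(* The current state of mode c before round i: the target of the last
   transition given to c, or its start state. *)
Fixpoint token (ts : seq transition) (c : 'I_#|mode_key|) (i : nat) : Q :=
  if i is i'.+1 then
    if mode ts i' == c then ttgt (nth t0 ts i') else token ts c i'
  else mode_start c.

Definition round (ts : seq transition) (i : nat) (c : 'I_#|mode_key|) : vpath A :=
  if mode ts i == c then VPath (tsrc (nth t0 ts i)) [:: tstep (nth t0 ts i)]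
  else VPath (token ts c i) [::].

Definition decomposition (a : vpath A) : decomp A #|mode_key| :=
  [seq round (path_trans a) i | i <- iota 0 (len a)].

Definition path_mode (a : vpath A) : 'I_#|mode_key| :=
  mode (path_trans a) (len a).-1.

Lemma mode_type ts x i : all (mem (trans A)) ts ->
  mode ts x = mode ts i -> step_type ts x = step_type ts i.
Proof.
move=> ts_trans /enum_rank_inj [] same _.
by apply: encode_inj; rewrite ?step_type_trans ?size_rtype.
Qed.

Lemma class_start_eq ts x i : x <= i -> step_type ts x = step_type ts i ->
  class_start ts x = class_start ts i.
Proof.
move=> xi same; rewrite /class_start /first_occurrence same.
have -> : iota 0 i.+1 = iota 0 x.+1 ++ iota x.+1 (i - x).
  by rewrite -iotaD addSn subnKC.
rewrite find_cat; case: ifP => // /hasPn /(_ x).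
by rewrite mem_iota ltnSn same eqxx => /(_ isT).
Qed.

Lemma mode_eq ts x i :
  x <= i -> step_type ts x = step_type ts i -> mode ts x = mode ts i.
Proof. by move=> xi same; rewrite /mode same (class_start_eq xi same). Qed.

Lemma class_start_first ts i :
  (forall x, x < i -> step_type ts x != step_type ts i) ->
  class_start ts i = tsrc (nth t0 ts i).
Proof.
move=> fresh; rewrite /class_start /first_occurrence.
have -> : iota 0 i.+1 = iota 0 i ++ [:: i] by rewrite -addn1 iotaD.
rewrite find_cat.
case: ifP => [/hasP [x]|_]; last by rewrite size_iota /= eqxx addn0.
by rewrite mem_iota add0n => /andP[_ /fresh /negbTE ->].
Qed.

Lemma token_spec ts c i :
  (token ts c i = mode_start c /\ forall x, x < i -> mode ts x != c) \/
  (exists x, [/\ x < i, mode ts x = c, token ts c i = ttgt (nth t0 ts x) &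
     forall z, x < z < i -> mode ts z != c]).
Proof.
elim: i => [|i IH] /=; first by left.
have [mode_i|mode_i] := eqVneq (mode ts i) c.
  by right; exists i; split=> // z /andP[iz]; rewrite ltnS leqNgt iz.
case: IH => [[-> unused]|[x [xi mode_x -> later]]].
  by left; split=> // x; rewrite ltnS leq_eqVlt => /orP[/eqP ->|/unused].
right; exists x; split=> //; first exact: ltnW.
move=> z /andP[xz].
by rewrite ltnS leq_eqVlt => /orP[/eqP ->|zi] //; apply: later; rewrite xz.
Qed.

(* The mode of i is currently where transition i starts: this is where the
   key lemma [rtype_chain] is used. *)
Lemma token_mode ts i : all (mem (trans A)) ts -> chained tsrc ttgt t0 ts ->
  i < size ts -> token ts (mode ts i) i = tsrc (nth t0 ts i).
Proof.
move=> ts_trans chain i_lt.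
case: (token_spec ts (mode ts i) i) => [[-> unused]|[x [xi mode_x -> later]]].
  rewrite /mode_start /mode enum_rankK /=; apply: class_start_first => x xi.
  by apply: contraNneq (unused x xi) => same; rewrite (mode_eq (ltnW xi) same).
have type_x := mode_type ts_trans mode_x.
apply: (rtype_chain chain _ type_x); rewrite ?xi // => j /andP[xj ji].
apply: contraTneq (later j _) => [same|]; last by rewrite xj.
by rewrite (mode_eq (ltnW ji) (etrans same type_x)) eqxx.
Qed.

Lemma decode_mode ts i : all (mem (trans A)) ts ->
  ~~ isprob (tsrc (nth t0 ts i)) ->
  mode_strategy (mode ts i) (tsrc (nth t0 ts i)) = tstep (nth t0 ts i).
Proof.
move=> ts_trans nondet_i; rewrite /mode_strategy /mode enum_rankK /= /decode ffunE.
rewrite !inordK ?ltnS ?index_size // /step_type rtype_label ?mem_nondet //.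
by rewrite nth_index ?eqxx // nth_trans.
Qed.

Lemma mode_congr ts ts' i :
  (forall j, j <= i -> step_type ts j = step_type ts' j) ->
  tsrc (nth t0 ts (first_occurrence ts i)) =
  tsrc (nth t0 ts' (first_occurrence ts i)) ->
  mode ts i = mode ts' i.
Proof.
move=> same_type same_start.
have same_find : first_occurrence ts' i = first_occurrence ts i.
  apply: eq_in_find => x; rewrite mem_iota add0n ltnS => /andP[_ xi] /=.
  by rewrite !same_type.
by rewrite /mode /class_start same_find same_start (same_type i (leqnn i)).
Qed.

Lemma first_occurrence_le ts i : first_occurrence ts i <= i.
Proof.
rewrite /first_occurrence -ltnS -[i.+1 in X in _ < X](size_iota 0) -has_find.
by apply/hasP; exists i; rewrite ?mem_iota ?add0n ?ltnSn.
Qed.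

Lemma mode_prefix ts ts' i :
  (forall j, j <= i -> nth t0 ts j = nth t0 ts' j) -> mode ts i = mode ts' i.
Proof.
move=> same; apply: mode_congr => [j ji|]; last by rewrite same ?first_occurrence_le.
by apply: rtype_prefix => x xj; apply: same; apply: leq_trans xj ji.
Qed.

Lemma mode_probabilistic ts ts' i :
  (forall j, j < i -> nth t0 ts j = nth t0 ts' j) ->
  tsrc (nth t0 ts i) = tsrc (nth t0 ts' i) -> isprob (tsrc (nth t0 ts i)) ->
  mode ts i = mode ts' i.
Proof.
move=> same src_i prob_i.
have same_type j : j <= i -> step_type ts j = step_type ts' j.
  rewrite leq_eqVlt => /orP[/eqP ->|ji].
    by apply: rtype_unlabelled; rewrite ?mem_nondet ?prob_i.
  by apply: rtype_prefix => x xj; apply: same; apply: leq_ltn_trans xj ji.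
apply: mode_congr => //; move: (first_occurrence_le ts i).
by rewrite leq_eqVlt => /orP[/eqP ->|/same ->].
Qed.

Lemma token_prefix ts ts' c i :
  (forall j, j < i -> nth t0 ts j = nth t0 ts' j) -> token ts c i = token ts' c i.
Proof.
elim: i => [|i IH] same //=; rewrite (@mode_prefix ts ts') => [|j ji]; last first.
  by apply: same; rewrite ltnS.
by rewrite same // IH // => j ji; apply: same; apply: ltnW.
Qed.

Lemma round_prefix ts ts' i c :
  (forall j, j <= i -> nth t0 ts j = nth t0 ts' j) -> round ts i c = round ts' i c.
Proof.
move=> same; rewrite /round (mode_prefix same) same ?(@token_prefix ts ts') //.
by move=> j ji; apply: same; apply: ltnW.
Qed.

Lemma len_round ts i c : len (round ts i c) = (mode ts i == c).
Proof. by rewrite /round; case: ifP. Qed.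

Lemma steps_round ts i c : psteps (round ts i c) =
  if mode ts i == c then [:: tstep (nth t0 ts i)] else [::].
Proof. by rewrite /round; case: ifP. Qed.

Lemma plast_round ts i c : plast (round ts i c) = token ts c i.+1.
Proof. by rewrite /round /plast /=; case: ifP. Qed.

Lemma round_steps ts i :
  flatten [seq psteps (round ts i c) | c <- enum 'I_#|mode_key|] =
  [:: tstep (nth t0 ts i)].
Proof.
rewrite (@flatten_single _ _ _ (mode ts i)) ?enum_uniq ?mem_enum ?steps_round ?eqxx //.
by move=> c c_i; rewrite steps_round eq_sym (negbTE c_i).
Qed.

Lemma rounds_steps ts s :
  flatten (map (@psteps _ A) (flat_decomp [seq round ts i | i <- s])) =
  [seq tstep (nth t0 ts i) | i <- s].
Proof.
by elim: s => //= i s IH; rewrite map_cat flatten_cat IH -map_comp round_steps.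
Qed.

Section OnePath.
Variable ts : seq transition.
Hypotheses (ts_trans : all (mem (trans A)) ts) (ts_chained : chained tsrc ttgt t0 ts).

Lemma pstart_round i c : i < size ts -> pstart (round ts i c) = token ts c i.
Proof.
by move=> i_lt; rewrite /round; case: ifP => //= /eqP <-; rewrite token_mode.
Qed.

Lemma round_path i c : is_path (round ts i c).
Proof.
rewrite /round; case: ifP => _ //; rewrite /is_path /= andbT.
by case: (nth t0 ts i) (nth_trans i ts_trans) => [[]].
Qed.

Lemma rounds_concat m i : i + m <= size ts ->
  chain_ok (tsrc (nth t0 ts i)) (flat_decomp [seq round ts i' | i' <- iota i m]).
Proof.
elim: m i => [//|m IH] i im.
have -> : flat_decomp [seq round ts i' | i' <- iota i m.+1] =
  [seq round ts i c | c <- enum 'I_#|mode_key|] ++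
  flat_decomp [seq round ts i' | i' <- iota i.+1 m] by [].
rewrite (@chain_ok_single _ _ (mode ts i)) ?enum_uniq ?mem_enum ?steps_round ?eqxx //;
  last by move=> c c_i; rewrite steps_round eq_sym (negbTE c_i).
have -> : pstart (round ts i (mode ts i)) = tsrc (nth t0 ts i) by rewrite /round eqxx.
have -> : plast (round ts i (mode ts i)) = ttgt (nth t0 ts i) by rewrite /round eqxx.
rewrite eqxx /=; case: m IH im => [//|m] IH im.
rewrite ts_chained; first by apply: IH; rewrite addSnnS.
by apply: leq_trans im; rewrite !addnS !ltnS leq_addr.
Qed.

Lemma round_mode_step i c : i < size ts ->
  valid_from (token ts c i) (psteps (round ts i c)) &&
  compat_from (mode_strategy c) (token ts c i) (psteps (round ts i c)).
Proof.
move=> i_lt; rewrite steps_round; have [<-|] //= := eqVneq (mode ts i) c.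
rewrite token_mode // !andbT; apply/andP; split.
  by case: (nth t0 ts i) (nth_trans i ts_trans) => [[]].
by case: (boolP (isprob _)) => //= nondet_i; rewrite decode_mode.
Qed.

Lemma mode_path_from c m i : i + m <= size ts ->
  let s := flatten [seq psteps (round ts i' c) | i' <- iota i m] in
  valid_from (token ts c i) s && compat_from (mode_strategy c) (token ts c i) s.
Proof.
elim: m i => [//|m IH] i im /=.
have i_lt : i < size ts by apply: leq_trans im; rewrite addnS ltnS leq_addr.
have last_round :
    last (token ts c i) (map snd (psteps (round ts i c))) = token ts c i.+1.
  by rewrite -plast_round /plast pstart_round.
rewrite valid_cat compat_cat last_round.
have /andP[-> ->] := round_mode_step c i_lt.
by apply: IH; rewrite addSnnS.
Qed.

Lemma rounds_decompose : 0 < size ts ->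
  is_MD_decomposition mode_strategy mode_start [seq round ts i | i <- iota 0 (size ts)]
    (VPath (tsrc (nth t0 ts 0)) (map tstep ts)).
Proof.
move=> ts_pos; have nth_rounds r0 i : i < size ts ->
    nth r0 [seq round ts i | i <- iota 0 (size ts)] i = round ts i.
  by move=> i_lt; rewrite (nth_map 0) ?size_iota // nth_iota.
split; rewrite ?size_map ?size_iota //.
- by move=> i j i_lt r0; rewrite nth_rounds // round_path.
- split; first exact: rounds_concat.
  by rewrite rounds_steps /= -[ts in map _ ts](mkseq_nth t0) /mkseq -map_comp.
- move=> i j i_lt r0; rewrite !nth_rounds ?(ltnW i_lt) //.
  by rewrite plast_round pstart_round.
- move=> j; split; first by move=> r0; rewrite -nth0 nth_rounds // pstart_round.
  rewrite /is_path /compatible /= -map_comp.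
  by case/andP: (mode_path_from j (leqnn (0 + size ts))).
Qed.
End OnePath.

Lemma path_trans_valid (a : vpath A) : is_path a -> all (mem (trans A)) (path_trans a).
Proof. by rewrite /is_path valid_transitions. Qed.

Lemma size_path_trans (a : vpath A) : size (path_trans a) = len a.
Proof. exact: size_transitions. Qed.

Lemma path_trans_rebuild (a : vpath A) : 0 < len a ->
  VPath (tsrc (nth t0 (path_trans a) 0)) (map tstep (path_trans a)) = a.
Proof.
by case: a => p s s_pos; rewrite /path_trans tstep_transitions tsrc_transitions ?take0.
Qed.

Lemma decomposition_ok (a : vpath A) : is_path a -> 0 < len a ->
  is_MD_decomposition mode_strategy mode_start (decomposition a) a.
Proof.
move=> a_path a_pos.
have := rounds_decompose (path_trans_valid a_path)
  (@transitions_chained t0 (pstart a) (psteps a)).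
by rewrite size_path_trans path_trans_rebuild //; apply.
Qed.

Lemma len_last_prefix (a : vpath A) :
  0 < len a -> len (pprefix a (len a).-1) = (len a).-1.
Proof. by move=> a_pos; rewrite /len /pprefix size_take -/(len a) ltn_predL a_pos. Qed.

Lemma decomposition_rcons (a : vpath A) : 0 < len a ->
  decomposition a =
  rcons (decomposition (pprefix a (len a).-1)) (round (path_trans a) (len a).-1).
Proof.
move=> a_pos; rewrite /decomposition len_last_prefix //.
rewrite -{1}(prednK a_pos) -addn1 iotaD map_cat cats1.
congr rcons; apply/eq_in_map => i; rewrite mem_iota add0n => /andP[_ i_lt].
apply: functional_extensionality => c; apply: round_prefix => j ji.
by rewrite /path_trans take_transitions nth_take // (leq_ltn_trans ji).
Qed.

Lemma path_mode_probabilistic (a b : vpath A) : 0 < len a -> 0 < len b ->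
  pprefix a (len a).-1 = pprefix b (len b).-1 ->
  isprob (plast (pprefix a (len a).-1)) -> path_mode a = path_mode b.
Proof.
move=> a_pos b_pos same_prefix prob_last.
have same_len : (len a).-1 = (len b).-1.
  by rewrite -len_last_prefix // same_prefix len_last_prefix.
have src_last x : 0 < len x ->
    tsrc (nth t0 (path_trans x) (len x).-1) = plast (pprefix x (len x).-1).
  by move=> x_pos; rewrite tsrc_transitions // ltn_predL.
have in_prefix x j : j < (len x).-1 ->
    nth t0 (path_trans x) j = nth t0 (path_trans (pprefix x (len x).-1)) j.
  by move=> j_lt; rewrite /path_trans take_transitions nth_take.
rewrite /path_mode -same_len; apply: mode_probabilistic; rewrite ?src_last //.
  by move=> j j_lt; rewrite in_prefix // same_prefix -in_prefix -?same_len.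
by rewrite same_prefix same_len -src_last.
Qed.

End VassModes.

Theorem lemma5p3 (d : nat) (A : VASS_MDP d) :
  exists (k : nat) (pis : 'I_k -> strategy A) (ps : 'I_k -> st A)
         (Decomp : vpath A -> decomp A k) (mode : vpath A -> 'I_k),
    (forall j, is_MD (pis j)) /\
    (forall a : vpath A, is_path a -> 0 < len a ->
       is_MD_decomposition pis ps (Decomp a) a /\
       (exists gam : 'I_k -> vpath A,
          Decomp a = rcons (Decomp (pprefix a (len a).-1)) gam /\
          (forall j, 0 < len (gam j) <-> j = mode a))) /\
    (forall a b : vpath A, is_path a -> 0 < len a -> is_path b -> 0 < len b ->
       pprefix a (len a).-1 = pprefix b (len b).-1 ->
       isprob (plast (pprefix a (len a).-1)) ->
       mode a = mode b).
Proof.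
have [t0 t0_trans] : exists t0, t0 \in trans A.
  have [p _] : exists p : st A, p \in st A by apply/card_gt0P; apply: st_nonempty.
  have : trans A != [::] by apply: contraNneq (out_nonempty p) => ->.
  by case: (trans A) => // t s _; exists t; rewrite mem_head.
exists #|mode_key A|, (mode_strategy t0), (@mode_start d A), (decomposition t0),
  (path_mode t0).
split; first by move=> c; apply: decode_MD.
split=> [a a_path a_pos|a b _ a_pos _ b_pos]; last exact: path_mode_probabilistic.
split; first exact: decomposition_ok.
exists (round t0 (path_trans a) (len a).-1); split; first exact: decomposition_rcons.
by move=> c; rewrite len_round lt0b eq_sym; split=> /eqP.
Qed.
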